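(* Let $H$ be a Hilbert space and $U_{ik}\in B(H)$, $i,k=1,\dots,n$, operators satisfying relations (R1)–(R5); put $P_{ik}=U_{ik}^*U_{ik}$ and $Q_{ik}=U_{ik}U_{ik}^*$. Then for all $i,j,k,l$: $P_{ik}P_{il}=0$ and $Q_{ik}Q_{il}=0$ if $k\neq l$; $P_{ik}P_{jk}=0$ and $Q_{ik}Q_{jk}=0$ if $i\neq j$.
   Context: $n\ge2$, $\theta\in M_n(\mathbb R)$ skew-symmetric, $\omega_{ij}=e^{2\pi i\theta_{ij}}$. Relations, for all $i,j,k,l\in\{1,\dots,n\}$: (R1) $U_{ik}U_{jl}+\omega_{ji}U_{jk}U_{il}=\omega_{kl}U_{il}U_{jk}+\omega_{ji}\omega_{kl}U_{jl}U_{ik}$; (R2) $\sum_iU_{ik}U_{il}^*=\delta_{kl}1$; (R3) $\sum_iU_{il}^*U_{ik}=\delta_{kl}1$; (R4) $U_{jk}U_{ik}^*=0$ for $i\neq j$; (R5) $U_{ik}^*U_{jk}=0$ for $i\neq j$. *)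

From mathcomp Require Import all_boot all_algebra.
From mathcomp Require Import reals trigo.
From mathcomp Require Export complex.
Set Implicit Arguments. Unset Strict Implicit. Unset Printing Implicit Defensive.
Import GRing.Theory Num.Theory.
Local Open Scope ring_scope.

Definition is_inner_product (R : realType) (H : lmodType R[i])
    (ip : H -> H -> R[i]) : Prop :=
  [/\ (forall (a : R[i]) (x y z : H), ip (a *: x + y) z = a * ip x z + ip y z),
      (forall x y : H, ip y x = conjc (ip x y)),
      (forall x : H, 0 <= ip x x) &
      (forall x : H, ip x x = 0 -> x = 0)].

Definition ipnorm (R : realType) (H : lmodType R[i]) (ip : H -> H -> R[i])
  (x : H) : R[i] := sqrtC (ip x x).

Definition ip_complete (R : realType) (H : lmodType R[i])
    (ip : H -> H -> R[i]) : Prop :=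
  forall u : nat -> H,
    (forall e : R, 0 < e -> exists N : nat, forall m k : nat,
        (N <= m)%N -> (N <= k)%N -> ipnorm ip (u m - u k) < (Complex e 0)) ->
    exists l : H, forall e : R, 0 < e -> exists N : nat, forall m : nat,
        (N <= m)%N -> ipnorm ip (u m - l) < (Complex e 0).

Definition is_Hilbert (R : realType) (H : lmodType R[i])
    (ip : H -> H -> R[i]) : Prop :=
  is_inner_product ip /\ ip_complete ip.

Definition bounded_op (R : realType) (H : lmodType R[i])
    (ip : H -> H -> R[i]) (T : H -> H) : Prop :=
  (forall (a : R[i]) (x y : H), T (a *: x + y) = a *: T x + T y) /\
  exists M : R, forall x : H, ipnorm ip (T x) <= (Complex M 0) * ipnorm ip x.

Definition is_adjoint (R : realType) (H : lmodType R[i])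
    (ip : H -> H -> R[i]) (T Ts : H -> H) : Prop :=
  forall x y : H, ip (T x) y = ip x (Ts y).

(* omega_ij = exp(2 pi i theta_ij) *)
Definition omega (R : realType) (n : nat) (theta : 'M[R]_n) (i j : 'I_n)
  : R[i] :=
  Complex (cos (2 * pi * theta i j)) (sin (2 * pi * theta i j)).

From mathcomp Require Import all_boot all_algebra.
From mathcomp Require Import reals trigo.
From mathcomp Require Import complex.
Import GRing.Theory Num.Theory.
Local Open Scope ring_scope.

(* Only (R2)-(R5) and additivity are needed.  For k <> l, applying U^*_{ik}
   to the off-diagonal instance 0 = sum_j U_{jk} U^*_{jl} y of (R2) kills
   every term with j <> i by (R5), leaving U^*_{ik} U_{ik} U^*_{il} y = 0;
   with y = U_{il} x this is P_{ik} P_{il} x = 0.  Symmetrically (R3) and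
   (R4) give Q_{ik} Q_{il} = 0.  The products over i <> j vanish already
   in the middle, by (R4) and (R5). *)

Section BoundedOperators.

Variables (R : realType) (H : lmodType R[i]) (ip : H -> H -> R[i]) (T : H -> H).
Hypothesis T_bounded : bounded_op ip T.

Lemma bounded_opD : {morph T : x y / x + y}.
Proof. by case: T_bounded => T_lin _ x y; rewrite -[x in LHS]scale1r T_lin scale1r. Qed.

Lemma bounded_op0 : T 0 = 0.
Proof. by apply: (addIr (T 0)); rewrite -bounded_opD !add0r. Qed.

Lemma bounded_op_sum_supported (n : nat) (F : 'I_n -> H) (i : 'I_n) :
  (forall j, j != i -> T (F j) = 0) -> T (\sum_(j < n) F j) = T (F i).
Proof.
move=> T_F_eq0; rewrite (big_morph T bounded_opD bounded_op0) (bigD1 i) //=.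
by rewrite big1 ?addr0.
Qed.

End BoundedOperators.

Arguments bounded_op0 {R H ip T}.
Arguments bounded_op_sum_supported {R H ip T} T_bounded {n} F i.

Section PartialIsometryRelations.

Variables (R : realType) (H : lmodType R[i]) (ip : H -> H -> R[i]) (n : nat).
Variables (U Us : 'I_n -> 'I_n -> H -> H).
Hypothesis U_bounded : forall i k, bounded_op ip (U i k).
Hypothesis Us_bounded : forall i k, bounded_op ip (Us i k).
Hypothesis R2 : forall (k l : 'I_n) (x : H),
  \sum_(i < n) U i k (Us i l x) = (if k == l then x else 0).
Hypothesis R3 : forall (k l : 'I_n) (x : H),
  \sum_(i < n) Us i l (U i k x) = (if k == l then x else 0).
Hypothesis R4 : forall (i j k : 'I_n) (x : H), i != j -> U j k (Us i k x) = 0.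
Hypothesis R5 : forall (i j k : 'I_n) (x : H), i != j -> Us i k (U j k x) = 0.

Lemma Us_U_Us_eq0 (i k l : 'I_n) (y : H) :
  k != l -> Us i k (U i k (Us i l y)) = 0.
Proof.
move=> neq_kl; have := R2 k l y; rewrite (negbTE neq_kl) => R2_kl.
rewrite -(bounded_op_sum_supported (Us_bounded i k) (fun j => U j k (Us j l y))).
  by rewrite R2_kl (bounded_op0 (Us_bounded i k)).
by move=> j neq_ji; apply: R5; rewrite eq_sym.
Qed.

Lemma U_Us_U_eq0 (i k l : 'I_n) (y : H) :
  k != l -> U i k (Us i k (U i l y)) = 0.
Proof.
move=> neq_kl; have := R3 l k y; rewrite eq_sym (negbTE neq_kl) => R3_lk.
rewrite -(bounded_op_sum_supported (U_bounded i k) (fun j => Us j k (U j l y))).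
  by rewrite R3_lk (bounded_op0 (U_bounded i k)).
by move=> j neq_ji; apply: R4.
Qed.

End PartialIsometryRelations.

Arguments Us_U_Us_eq0 {R H ip n U Us}.
Arguments U_Us_U_eq0 {R H ip n U Us}.

Theorem corollary3p11 (R : realType) (H : lmodType R[i]) (ip : H -> H -> R[i])
  (n : nat) (theta : 'M[R]_n) (U Us : 'I_n -> 'I_n -> H -> H) :
  is_Hilbert ip ->
  (1 < n)%N ->
  theta^T = - theta ->
  (forall i k, bounded_op ip (U i k)) ->
  (forall i k, bounded_op ip (Us i k)) ->
  (forall i k, is_adjoint ip (U i k) (Us i k)) ->
  (* (R1) *)
  (forall (i j k l : 'I_n) (x : H),
      U i k (U j l x) + omega theta j i *: U j k (U i l x)
      = omega theta k l *: U i l (U j k x)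
        + (omega theta j i * omega theta k l) *: U j l (U i k x)) ->
  (* (R2) *)
  (forall (k l : 'I_n) (x : H),
      \sum_(i < n) U i k (Us i l x) = (if k == l then x else 0)) ->
  (* (R3) *)
  (forall (k l : 'I_n) (x : H),
      \sum_(i < n) Us i l (U i k x) = (if k == l then x else 0)) ->
  (* (R4) *)
  (forall (i j k : 'I_n) (x : H), i != j -> U j k (Us i k x) = 0) ->
  (* (R5) *)
  (forall (i j k : 'I_n) (x : H), i != j -> Us i k (U j k x) = 0) ->
  let P := fun i k (x : H) => Us i k (U i k x) in
  let Q := fun i k (x : H) => U i k (Us i k x) in
  (forall (i k l : 'I_n) (x : H), k != l ->
      P i k (P i l x) = 0 /\ Q i k (Q i l x) = 0) /\
  (forall (i j k : 'I_n) (x : H), i != j ->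
      P i k (P j k x) = 0 /\ Q i k (Q j k x) = 0).
Proof.
move=> _ _ _ U_bounded Us_bounded _ _ R2 R3 R4 R5 P Q; split.
- move=> i k l x neq_kl; split.
  + exact: (Us_U_Us_eq0 Us_bounded R2 R5).
  + exact: (U_Us_U_eq0 U_bounded R3 R4).
- move=> i j k x neq_ij; split.
  + by rewrite /P (R4 _ _ _ _ (_ : j != i)) 1?eq_sym // (bounded_op0 (Us_bounded i k)).
  + by rewrite /Q R5 // (bounded_op0 (U_bounded i k)).
Qed.
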